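(* Let $\mathbf{L}$ be the $8\times 12$ $(0,1)$-matrix with rows $(1,1,0,1,0,0,0,0,0,0,0,0)$, $(1,1,0,0,1,0,0,0,0,1,0,0)$, $(1,0,1,0,0,1,0,0,0,0,1,0)$, $(1,0,1,0,0,0,1,0,0,0,0,0)$, $(0,1,1,0,0,0,0,1,0,0,0,1)$, $(0,1,1,0,0,0,0,0,1,0,0,0)$, $(1,\dots,1)$, $(0,\dots,0)$, and $\mathbf{R}$ the $8\times12$ $(0,1)$-matrix with rows $(1,1,0,0,1,0,0,\dots,0)$, $(1,1,1,0,0,1,0,\dots,0)$, $(1,1,1,1,0,0,0,\dots,0)$, $(1,0,1,0,1,0,0,\dots,0)$, $(1,1,0,1,0,1,0,\dots,0)$, $(1,0,0,1,0,1,0,\dots,0)$, $(1,\dots,1)$, $(0,\dots,0)$ (in the first six rows, the last six entries are $0$). Then $(\mathbf{L},\mathbf{R})$ is centered and $\mathbf{L}\preceq^{\mathrm{BC}}\mathbf{R}$, but $\mathbf{L}\not\preceq^{\mathrm{PC}}\mathbf{R}$; specifically, for $v=(2,1,1,3,1,3,0,0)$ one has $v\mathbf{L}\not\preceq v\mathbf{R}$.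
   Context: $\mathbf{A}_{(i)}$ is the $i$-th row; $e$ the all-ones row vector; $|v|=\sum_k|v_k|$. A pair of $(0,1)$-matrices with the same number of rows, having a common all-zero row, is centered if $|\mathbf{L}_{(i)}|=|\mathbf{R}_{(i)}|$ for all $i$ and some row satisfies $\mathbf{L}_{(i)}=e=\mathbf{R}_{(i)}$. For $x,y\in\mathbb{R}^d$, $x\preceq y$ means $\sum_{n=1}^k x^\downarrow_n\le\sum_{n=1}^k y^\downarrow_n$ for $k=1,\dots,d-1$ and $\sum_n x_n=\sum_n y_n$, with $x^\downarrow_n$ the $n$-th largest component. $\mathbf{L}\preceq^{\mathrm{BC}}\mathbf{R}$ means $v\mathbf{L}\preceq v\mathbf{R}$ for all $v\in\{0,1\}^8$; $\mathbf{L}\preceq^{\mathrm{PC}}\mathbf{R}$ means $v\mathbf{L}\preceq v\mathbf{R}$ for all $v\in\mathbb{R}_{\ge0}^8$ (row vectors $v$). *)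

From HB Require Import structures.
From mathcomp Require Import all_boot all_order all_algebra.
From mathcomp Require Import reals.
Set Implicit Arguments. Unset Strict Implicit. Unset Printing Implicit Defensive.
Import Order.TTheory GRing.Theory Num.Theory.
Local Open Scope ring_scope.

Section Defs.
Variable R : realDomainType.

Definition decr {d : nat} (x : 'rV[R]_d) : seq R :=
  sort (fun a b : R => b <= a) [seq x ord0 j | j <- enum 'I_d].

Definition topsum {d : nat} (x : 'rV[R]_d) (k : nat) : R :=
  \sum_(n < k) nth 0 (decr x) n.

Definition majorized {d : nat} (x y : 'rV[R]_d) : Prop :=
  (forall k : nat, (1 <= k <= d - 1)%N -> topsum x k <= topsum y k) /\
  \sum_(j < d) x ord0 j = \sum_(j < d) y ord0 j.

Definition is01 {m n : nat} (A : 'M[R]_(m, n)) : Prop :=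
  forall i j, A i j = 0 \/ A i j = 1.

Definition l1norm {n : nat} (v : 'rV[R]_n) : R := \sum_(k < n) `|v ord0 k|.

Definition ones {n : nat} : 'rV[R]_n := const_mx 1.

Definition centered {m n : nat} (L Rm : 'M[R]_(m, n)) : Prop :=
  [/\ is01 L, is01 Rm,
      exists i, row i L = 0 /\ row i Rm = 0,
      forall i, l1norm (row i L) = l1norm (row i Rm)
    & exists i, row i L = ones /\ row i Rm = ones].

Definition BC_le {n : nat} (L Rm : 'M[R]_(8, n)) : Prop :=
  forall v : 'rV[R]_8, (forall i, v ord0 i = 0 \/ v ord0 i = 1) ->
    majorized (v *m L) (v *m Rm).

Definition PC_le {n : nat} (L Rm : 'M[R]_(8, n)) : Prop :=
  forall v : 'rV[R]_8, (forall i, 0 <= v ord0 i) ->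
    majorized (v *m L) (v *m Rm).

Definition Lrows : seq (seq nat) :=
  [:: [:: 1;1;0;1;0;0;0;0;0;0;0;0];
      [:: 1;1;0;0;1;0;0;0;0;1;0;0];
      [:: 1;0;1;0;0;1;0;0;0;0;1;0];
      [:: 1;0;1;0;0;0;1;0;0;0;0;0];
      [:: 0;1;1;0;0;0;0;1;0;0;0;1];
      [:: 0;1;1;0;0;0;0;0;1;0;0;0];
      [:: 1;1;1;1;1;1;1;1;1;1;1;1];
      [:: 0;0;0;0;0;0;0;0;0;0;0;0]]%N.

Definition Rrows : seq (seq nat) :=
  [:: [:: 1;1;0;0;1;0;0;0;0;0;0;0];
      [:: 1;1;1;0;0;1;0;0;0;0;0;0];
      [:: 1;1;1;1;0;0;0;0;0;0;0;0];
      [:: 1;0;1;0;1;0;0;0;0;0;0;0];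
      [:: 1;1;0;1;0;1;0;0;0;0;0;0];
      [:: 1;0;0;1;0;1;0;0;0;0;0;0];
      [:: 1;1;1;1;1;1;1;1;1;1;1;1];
      [:: 0;0;0;0;0;0;0;0;0;0;0;0]]%N.

Definition mx_of_rows (s : seq (seq nat)) : 'M[R]_(8, 12) :=
  \matrix_(i < 8, j < 12) (nth 0%N (nth [::] s i) j)%:R.

Definition Lmx : 'M[R]_(8, 12) := mx_of_rows Lrows.
Definition Rmx : 'M[R]_(8, 12) := mx_of_rows Rrows.

Definition vwit : 'rV[R]_8 :=
  \row_(i < 8) (nth 0%N [:: 2; 1; 1; 3; 1; 3; 0; 0]%N i)%:R.

End Defs.

From HB Require Import structures.
From mathcomp Require Import all_boot all_order all_algebra.
From mathcomp Require Import reals.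
From mathcomp Require Import zify.
Set Implicit Arguments. Unset Strict Implicit. Unset Printing Implicit Defensive.
Import Order.TTheory GRing.Theory Num.Theory.
Local Open Scope ring_scope.

(* All matrices and weight vectors involved have natural entries, so each
   product v L, v R is a natural row vector and majorization between such
   vectors is a decidable comparison of sorted partial sums of natural
   numbers. Centeredness and the 2^8 binary tests defining BC are then
   checked by computation, as is the failure at the witness v, where the
   three largest entries of v L sum to 22 but those of v R only to 21.
   The failure at this nonnegative v refutes PC. *)

Lemma sumn_take (s : seq nat) k : (\sum_(n < k) nth 0 s n)%N = sumn (take k s).
Proof.
elim: k => [|k IHk]; first by rewrite big_ord0 take0.
rewrite big_ord_recr /= IHk; case: (ltnP k (size s)) => [lt_ks | le_sk].
  by rewrite (take_nth 0 lt_ks) -cats1 sumn_cat /= addn0.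
by rewrite (nth_default 0 le_sk) addn0 !take_oversize // ltnW.
Qed.

Definition majorizedn (a b : seq nat) : bool :=
  all (fun k => sumn (take k (sort geq a)) <= sumn (take k (sort geq b)))%N
      (iota 1 (size a).-1)
  && (sumn a == sumn b).

Definition vecmuln (m n : nat) (w : seq nat) (s : seq (seq nat)) : seq nat :=
  [seq sumn [seq nth 0 w i * nth 0 (nth [::] s i) j | i <- iota 0 m]
  | j <- iota 0 n]%N.

Lemma size_vecmuln m n w s : size (vecmuln m n w s) = n.
Proof. by rewrite size_map size_iota. Qed.

Fixpoint bitseqs (n : nat) : seq (seq nat) :=
  if n is n'.+1 then map (cons 0%N) (bitseqs n') ++ map (cons 1%N) (bitseqs n')
  else [:: [::]].

Lemma mem_bitseqs n w :
  size w = n -> all (leq^~ 1%N) w -> w \in bitseqs n.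
Proof.
elim: n w => [|n IHn] [|a w] //= [size_w] /andP[a01 w01].
rewrite mem_cat; case: a a01 => [|[|]] // _.
  by rewrite map_f ?IHn.
by rewrite orbC map_f ?IHn.
Qed.

Lemma sumn_map_iota (G : nat -> nat) n :
  sumn [seq G i | i <- iota 0 n] = (\sum_(i < n) G i)%N.
Proof. by rewrite sumnE big_map -(big_mkord xpredT G) /index_iota subn0. Qed.

Section NatMatrices.
Variable R : realDomainType.

Definition nat_row (d : nat) (a : seq nat) : 'rV[R]_d :=
  \row_(j < d) (nth 0%N a j)%:R.

Definition nat_mx (m n : nat) (s : seq (seq nat)) : 'M[R]_(m, n) :=
  \matrix_(i < m, j < n) (nth 0%N (nth [::] s i) j)%:R.

Section Majorization.
Variables (d : nat) (a : seq nat).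
Hypothesis size_a : size a = d.

Lemma decr_nat_row : decr (nat_row d a) = [seq n%:R | n <- sort geq a].
Proof.
rewrite /decr.
have -> : [seq nat_row d a ord0 j | j <- enum 'I_d] = [seq n%:R | n <- a].
  rewrite -[in RHS](take_size a) size_a -(map_nth_iota0 0%N) ?size_a //.
  rewrite -val_enum_ord.
  by rewrite -!map_comp; apply: eq_map => j; rewrite /= mxE.
by apply/esym/map_sort => m n; rewrite /= ler_nat.
Qed.

Lemma topsum_nat_row k :
  topsum (nat_row d a) k = (sumn (take k (sort geq a)))%:R.
Proof.
rewrite /topsum decr_nat_row -sumn_take natr_sum; apply: eq_bigr => i _.
by elim: (sort geq a) (nat_of_ord i) => [|x s IHs] [|n] //=.
Qed.

Lemma sum_nat_row : \sum_(j < d) nat_row d a ord0 j = (sumn a)%:R.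
Proof.
rewrite -[in RHS](take_size a) size_a -sumn_take natr_sum.
by apply: eq_bigr => j _; rewrite mxE.
Qed.
End Majorization.

Lemma majorized_nat_row d a b : size a = d -> size b = d ->
  majorized (nat_row d a) (nat_row d b) <-> majorizedn a b.
Proof.
move=> size_a size_b; rewrite /majorized /majorizedn !sum_nat_row // size_a.
split=> [[le_top /eqP]|/andP[/allP le_top /eqP eq_sum]].
- rewrite eqr_nat => ->; rewrite andbT.
  apply/allP => k; rewrite mem_iota => k_range.
  rewrite -(ler_nat R) -(topsum_nat_row size_a) -(topsum_nat_row size_b).
  by apply: le_top; lia.
- split=> [k k_range|]; last by rewrite eq_sum.
  by rewrite !topsum_nat_row // ler_nat; apply: le_top; rewrite mem_iota; lia.
Qed.

Lemma nat_row_mul_nat_mx m n w s :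
  nat_row m w *m nat_mx m n s = nat_row n (vecmuln m n w s).
Proof.
apply/rowP => j; rewrite !mxE /vecmuln (nth_map 0%N) ?size_iota // nth_iota //.
rewrite sumn_map_iota natr_sum; apply: eq_bigr => i _.
by rewrite !mxE add0n natrM.
Qed.

Lemma nat_mx01 m n s : all (all (leq^~ 1%N)) s -> is01 (nat_mx m n s).
Proof.
move=> s01 i j; rewrite mxE.
have row01 : all (leq^~ 1%N) (nth [::] s i).
  have [lt_is | le_si] := ltnP i (size s); last by rewrite nth_default.
  exact: (all_nthP [::] s01).
have [lt_j | le_j] := ltnP j (size (nth [::] s i)).
  2: by rewrite nth_default //; left.
move: (all_nthP 0%N row01 j lt_j).
by case: (nth 0%N _ j) => [|[|]] // _; [left | right].
Qed.

Lemma row_nat_mx_nseq m n s (i : 'I_m) c :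
  nth [::] s i = nseq n c -> row i (nat_mx m n s) = const_mx c%:R.
Proof. by move=> row_i; apply/rowP => j; rewrite !mxE row_i nth_nseq ltn_ord. Qed.

Lemma l1norm_row_nat_mx m n s (i : 'I_m) :
  l1norm (row i (nat_mx m n s)) = (sumn (take n (nth [::] s i)))%:R.
Proof.
rewrite /l1norm -sumn_take natr_sum; apply: eq_bigr => k _.
by rewrite !mxE ger0_norm.
Qed.

Lemma row01_nat_row m (v : 'rV[R]_m) :
  (forall j, v ord0 j = 0 \/ v ord0 j = 1) ->
  exists2 w, w \in bitseqs m & v = nat_row m w.
Proof.
move=> v01; exists [seq nat_of_bool (v ord0 j == 1) | j <- enum 'I_m].
  apply: mem_bitseqs; first by rewrite size_map size_enum_ord.
  by apply/allP => _ /mapP[j _ ->]; case: (_ == _).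
apply/rowP => j; rewrite mxE (nth_map j) ?size_enum_ord // nth_ord_enum.
by case: (v01 j) => ->; rewrite ?eqxx // eq_sym oner_eq0.
Qed.

End NatMatrices.

Section Counterexample.
Variable R : realDomainType.

Lemma centered_LR : centered (Lmx R) (Rmx R).
Proof.
split.
- by apply: nat_mx01; vm_compute.
- by apply: nat_mx01; vm_compute.
- by exists (inord 7); split; apply: (row_nat_mx_nseq R (c := 0%N)); rewrite inordK.
- move=> i; rewrite !l1norm_row_nat_mx; congr _%:R.
  by case: i => [[|[|[|[|[|[|[|[|i]]]]]]]] //]; vm_compute.
- by exists (inord 6); split; apply: (row_nat_mx_nseq R (c := 1%N)); rewrite inordK.
Qed.

Lemma BC_le_LR : BC_le (Lmx R) (Rmx R).
Proof.
move=> _ /row01_nat_row[w w01 ->].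
rewrite !nat_row_mul_nat_mx majorized_nat_row ?size_vecmuln //.
have all_bitseqs : all (fun w => majorizedn (vecmuln 8 12 w Lrows)
                                            (vecmuln 8 12 w Rrows)) (bitseqs 8).
  by vm_compute.
exact: (allP all_bitseqs).
Qed.

Lemma not_majorized_vwit : ~ majorized (vwit R *m Lmx R) (vwit R *m Rmx R).
Proof. by rewrite !nat_row_mul_nat_mx majorized_nat_row ?size_vecmuln. Qed.

End Counterexample.

Theorem mainTheorem10 (R : realType) :
  [/\ centered (Lmx R) (Rmx R),
      BC_le (Lmx R) (Rmx R),
      ~ PC_le (Lmx R) (Rmx R)
    & ~ majorized (vwit R *m Lmx R) (vwit R *m Rmx R)].
Proof.
split; [exact: centered_LR | exact: BC_le_LR | | exact: not_majorized_vwit].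
move=> PC_LR; apply: not_majorized_vwit; apply: PC_LR => i.
by rewrite mxE ler0n.
Qed.
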